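(* There is a unique morphism of ns operads $\varphi:Dend\to RatFct$ with $\varphi(\succ)=\frac{1}{x_1}\in RatFct_2$ and $\varphi(\prec)=\frac{1}{x_2}\in RatFct_2$. On planar binary trees it is given recursively by $\varphi(\mathrm{Y})=1\in RatFct_1$ and, for $s\in PBT_{p+1}$, $t\in PBT_{q+1}$, $$\varphi(s\vee t)=\frac{\varphi(s)(x_1,\dots,x_p)}{x_1+\cdots+x_p}\cdot\frac{\varphi(t)(x_{p+2},\dots,x_{p+q+1})}{x_{p+2}+\cdots+x_{p+q+1}}\in RatFct_{p+q+1},$$ where the first factor is replaced by $1$ if $p=0$ and the second by $1$ if $q=0$. Moreover, $\varphi:Dend_n\to RatFct_n$ is injective for every $n$, so $Dend$ is isomorphic to a sub-ns-operad of $RatFct$.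
   Context: $\mathbb{K}$ is a field. $RatFct$ is the ns operad with $RatFct_n=\mathbb{K}(x_1,\dots,x_n)$, identity $1\in\mathbb{K}(x_1)$, and partial compositions $(P\circ_iQ)(x_1,\dots,x_{n+m-1})=P(x_1,\dots,x_{i-1},x_i+\cdots+x_{i+m-1},x_{i+m},\dots,x_{n+m-1})\,Q(x_i,\dots,x_{i+m-1})$. A dendriform algebra is a vector space with two binary operations $\prec,\succ$ such that $(a\prec b)\prec c=a\prec(b\prec c+b\succ c)$, $(a\succ b)\prec c=a\succ(b\prec c)$, $(a\prec b+a\succ b)\succ c=a\succ(b\succ c)$; $Dend$ is the ns operad they define (generated by $\prec,\succ$ with these relations). $PBT_{n+1}$ is the set of planar binary trees with $n+1$ leaves, $|$ the one-leaf tree, $\mathrm{Y}$ the two-leaf tree, and $s\vee t$ the grafting of $s$ and $t$ onto a new root. $Dend_n$ has basis $PBT_{n+1}$, where a tree is identified with an $n$-ary dendriform operation recursively: $\mathrm{Y}=\mathrm{id}$, and for $s\in PBT_{p+1}$, $t\in PBT_{q+1}$, $s\vee t$ is the operation $(a_1,\dots,a_{p+q+1})\mapsto (s(a_1,\dots,a_p)\succ a_{p+1})\prec t(a_{p+2},\dots,a_{p+q+1})$, with the convention that the factor ''$s(\dots)\succ$'' is omitted if $p=0$ and ''$\prec t(\dots)$'' is omitted if $q=0$ (i.e. $s\vee t=s\succ\mathrm{Y}\prec t$ in the free dendriform algebra on $\mathrm{Y}$). *)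

From HB Require Import structures.
From mathcomp Require Import all_boot all_order all_algebra.
From mathcomp Require Import generic_quotient fraction.
Set Implicit Arguments. Unset Strict Implicit. Unset Printing Implicit Defensive.
Import Order.TTheory GRing.Theory Num.Theory.
Local Open Scope ring_scope.
Local Open Scope quotient_scope.

Notation "x %:F" := (@FracField.tofrac _ x).

Section RatFct.
Variable K : fieldType.

(* Polynomials in n variables x_0, ..., x_{n-1} (0-based), built as iterated
   univariate polynomials: mpoly n.+1 = {poly mpoly n}, the outer variable
   being x_n. *)
Fixpoint mpoly (n : nat) : idomainType :=
  match n with
  | 0 => K
  | n'.+1 => ({poly mpoly n'} : idomainType)
  end.

Fixpoint mconst (n : nat) (a : K) : mpoly n :=
  match n return mpoly n with
  | 0 => a
  | n'.+1 => (mconst n' a)%:P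
  end.

(* The variable x_k (0-based) in mpoly n; equals 0 when k >= n. *)
Fixpoint mvar (n : nat) (k : nat) : mpoly n :=
  match n return mpoly n with
  | 0 => 0
  | n'.+1 => if k == n' then 'X else (mvar n' k)%:P
  end.

Fixpoint msubst (m : nat) (v : nat -> mpoly m) (n : nat) : mpoly n -> mpoly m :=
  match n return mpoly n -> mpoly m with
  | 0 => fun a => mconst m a
  | n'.+1 => fun p => (map_poly (@msubst m v n') p).[v n']
  end.

Definition RatFct (n : nat) := {fraction mpoly n}.

Definition rvar (n k : nat) : RatFct n := (mvar n k)%:F.
Definition rconst (n : nat) (a : K) : RatFct n := (mconst n a)%:F.

Definition fsubst (n m : nat) (v : nat -> mpoly m) (P : RatFct n) : RatFct m :=
  let r := repr P in (msubst v \n_r)%:F / (msubst v \d_r)%:F.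

Definition vsum (N a b : nat) : mpoly N := \sum_(a <= k < b) mvar N k.

(* Partial composition P o_i Q (i 0-based), with explicit target arity N;
   the genuine operad composition is pcomp below, with N = n + m - 1:
   (P o_i Q)(x) = P(x_0,..,x_{i-1}, x_i+..+x_{i+m-1}, x_{i+m},..) * Q(x_i,..,x_{i+m-1}). *)
Definition pcompN (N n m : nat) (P : RatFct n) (i : nat) (Q : RatFct m) : RatFct N :=
  fsubst (fun j => if (j < i)%N then mvar N j
                   else if j == i then vsum N i (i + m)%N
                   else mvar N (j + m - 1)%N) P
  * fsubst (fun j => mvar N (i + j)%N) Q.

Definition pcomp (n m : nat) (P : RatFct n) (i : 'I_n) (Q : RatFct m)
  : RatFct (n + m)%N.-1 := pcompN (n + m)%N.-1 P i Q.

(* The three dendriform relations for prec := l, succ := r in RatFct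
   (the data of an ns operad morphism Dend -> RatFct):
   (a<b)<c = a<(b<c) + a<(b>c);  (a>b)<c = a>(b<c);  (a<b)>c + (a>b)>c = a>(b>c). *)
Definition dend_relations (l r : RatFct 2) : Prop :=
  [/\ pcomp l (0 : 'I_2) l = pcomp l (1 : 'I_2) l + pcomp l (1 : 'I_2) r,
      pcomp l (0 : 'I_2) r = pcomp r (1 : 'I_2) l &
      pcomp r (0 : 'I_2) l + pcomp r (0 : 'I_2) r = pcomp r (1 : 'I_2) r].

End RatFct.

Inductive pbt : Type := Leaf | Node of pbt & pbt.

Fixpoint pbt_eqb (s t : pbt) : bool :=
  match s, t with
  | Leaf, Leaf => true
  | Node s1 s2, Node t1 t2 => pbt_eqb s1 t1 && pbt_eqb s2 t2
  | _, _ => false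
  end.

Lemma pbt_eqP : Equality.axiom pbt_eqb.
Proof.
elim=> [|s1 IH1 s2 IH2] [|t1 t2] /=; try by constructor.
by apply: (iffP andP) => [[/IH1 -> /IH2 ->]|[<- <-]]; split; [apply/IH1|apply/IH2].
Qed.

HB.instance Definition _ := hasDecEq.Build pbt pbt_eqP.

Fixpoint leaves (t : pbt) : nat :=
  match t with Leaf => 1 | Node s u => leaves s + leaves u end.

(* arity of the dendriform operation of a tree in PBT_{n+1} is n *)
Definition arity (t : pbt) : nat := (leaves t).-1.

Definition Ytree : pbt := Node Leaf Leaf.

Section TreeEval.
Variable K : fieldType.
Variables (l r : RatFct K 2). (* images of prec and succ *)

(* Image of the tree-operation in RatFct, following
   s \/ t = (s(..) > a_{p+1}) < t(..), computed with partial compositions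
   (result placed in RatFct N; meaningful for N = arity t). *)
Fixpoint tree_eval (N : nat) (t : pbt) {struct t} : RatFct K N :=
  match t with
  | Leaf => 1
  | Node s u =>
    match s, u with
    | Leaf, Leaf => 1
    | Leaf, _ => pcompN N l 1 (tree_eval (arity u) u)
    | _, Leaf => pcompN N r 0 (tree_eval (arity s) s)
    | _, _ =>
      pcompN N (pcompN (arity s).+2 (pcompN 3 l 0 r) 0 (tree_eval (arity s) s))
             (arity s).+1 (tree_eval (arity u) u)
    end
  end.
End TreeEval.

(* phi on trees: prec |-> 1/x_2, succ |-> 1/x_1 (1-based), i.e. variables 1 and 0 *)
Definition phi_prec (K : fieldType) : RatFct K 2 := (rvar K 2 1)^-1.
Definition phi_succ (K : fieldType) : RatFct K 2 := (rvar K 2 0)^-1.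

Definition phiN (K : fieldType) (N : nat) (t : pbt) : RatFct K N :=
  tree_eval (phi_prec K) (phi_succ K) N t.

Definition phi (K : fieldType) (t : pbt) : RatFct K (arity t) := phiN K (arity t) t.

Definition shiftR (K : fieldType) (N o k : nat) (P : RatFct K k) : RatFct K N :=
  fsubst (fun j => mvar K N (o + j)%N) P.

(* Under phi(>) = 1/x_1 and phi(<) = 1/x_2 the three dendriform relations become
   identities between the inverses of x_1, x_2, x_3, x_1 + x_2 and x_2 + x_3.
   Unfolding the partial compositions gives the recursive formula, and with it
   phi(t) = 1/D(t), where D(t) is the product, over the internal vertices v of t
   other than the root, of the sum of the variables of the subtree rooted at v.  In a vanishing combination
   of the phi(t), pick a cherry of one of the trees, at position k, multiply by
   x_k and set x_k = 0.  A tree with a cherry at k has the factor x_k in D(t), so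
   its term becomes phi of the tree with this cherry pruned; every other term
   vanishes, its denominator staying nonzero.  Pruning at k is injective on the
   trees with a cherry at k, so the induction hypothesis applies. *)

From Pilot Require Import Defs.
From HB Require Import structures.
From mathcomp Require Import all_boot all_order all_algebra.
From mathcomp Require Import generic_quotient fraction.
From mathcomp Require Import zify ring.
Import GRing.Theory.
Local Open Scope ring_scope.
Set Implicit Arguments. Unset Strict Implicit. Unset Printing Implicit Defensive.

(** * Fractions and partial evaluation *)

Section FractionField.
Variable R : idomainType.

Lemma tofrac_repr (x : {fraction R}) : x = (\n_(repr x))%:F / (\d_(repr x))%:F.
Proof.
have dF : (\d_(repr x))%:F != 0 :> {fraction R} by rewrite tofrac_eq0 denom_ratioP.
apply: (mulIf dF); rewrite divfK // -[x in x * _]reprK.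
unlock tofrac; rewrite !piE; apply/eqmodP; rewrite /= FracField.equivfE.
by rewrite !numden_Ratio ?(oner_eq0, mulf_neq0, denom_ratioP) // !mulr1 mulrC.
Qed.

Lemma tofrac_divP (a b c d : R) : b != 0 -> d != 0 ->
  reflect (a%:F / b%:F = c%:F / d%:F :> {fraction R}) (a * d == c * b).
Proof.
move=> b0 d0; rewrite -tofrac_eq !tofracM -eqr_div ?tofrac_eq0 //; exact: eqP.
Qed.
End FractionField.

Definition specializes (R S : idomainType) (g : R -> S) P Q :=
  exists a b, [/\ g b != 0, P = a%:F / b%:F & Q = (g a)%:F / (g b)%:F].

Section Specialization.
Variables (R S : idomainType) (g : {rmorphism R -> S}).

Let neq0_of_map x : g x != 0 -> x != 0.
Proof. by apply: contra => /eqP ->; rewrite rmorph0. Qed.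

Lemma tofrac_div_map (a b c d : R) : g b != 0 -> g d != 0 ->
  a%:F / b%:F = c%:F / d%:F -> (g a)%:F / (g b)%:F = (g c)%:F / (g d)%:F.
Proof.
move=> gb0 gd0 /(tofrac_divP _ _ (neq0_of_map gb0) (neq0_of_map gd0))/eqP E.
by apply/(tofrac_divP _ _ gb0 gd0); rewrite -!rmorphM E.
Qed.

Lemma specializes_unique P Q Q' : specializes g P Q -> specializes g P Q' -> Q = Q'.
Proof. by move=> [a [b [gb0 -> ->]]] [c [d [gd0 E ->]]]; exact: tofrac_div_map. Qed.

Lemma specializes0 : specializes g 0 0.
Proof. by exists 0, 1; rewrite !(rmorph0, rmorph1, mul0r) oner_neq0. Qed.

Lemma specializesD P Q P' Q' :
  specializes g P Q -> specializes g P' Q' -> specializes g (P + P') (Q + Q').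
Proof.
move=> [a [b [gb0 -> ->]]] [c [d [gd0 -> ->]]].
exists (a * d + c * b), (b * d); split; first by rewrite rmorphM mulf_neq0.
  by rewrite addf_div ?tofrac_eq0 ?neq0_of_map // tofracD !tofracM.
by rewrite addf_div ?tofrac_eq0 // !(rmorphD, rmorphM, tofracD, tofracM).
Qed.

Lemma specializes_sum (I : eqType) (r : seq I) (F : I -> {fraction R}) G :
  (forall i, i \in r -> specializes g (F i) (G i)) ->
  specializes g (\sum_(i <- r) F i) (\sum_(i <- r) G i).
Proof.
elim: r => [|i r IH] FG; first by rewrite !big_nil; exact: specializes0.
rewrite !big_cons; apply: specializesD; first by apply: FG; rewrite mem_head.
by apply: IH => j jr; apply: FG; rewrite in_cons jr orbT.
Qed.
End Specialization.

(** * Substitutions *)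

Section HornerMap.
Variables (R S : comNzRingType) (f : R -> S) (x : S).
Hypotheses (f_zmod : zmod_morphism f) (f_monoid : monoid_morphism f).

HB.instance Definition _ := GRing.isZmodMorphism.Build R S f f_zmod.
HB.instance Definition _ := GRing.isMonoidMorphism.Build R S f f_monoid.

Lemma horner_map_is_zmod_morphism : zmod_morphism (fun p => (map_poly f p).[x]).
Proof. by move=> p q; rewrite /= rmorphB hornerD hornerN. Qed.

Lemma horner_map_is_monoid_morphism : monoid_morphism (fun p => (map_poly f p).[x]).
Proof. by split=> [|p q] /=; rewrite ?rmorph1 ?hornerC // rmorphM hornerM. Qed.
End HornerMap.

Section Substitution.
Variable K : fieldType.
Local Notation mpoly := (mpoly K).

Lemma mconst_is_zmod_morphism m : zmod_morphism (@mconst K m).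
Proof. by elim: m => //= m IH a b; rewrite IH polyCB. Qed.

Lemma mconst_is_monoid_morphism m : monoid_morphism (@mconst K m).
Proof. by elim: m => //= m [IH1 IHM]; split=> [|a b]; rewrite ?IH1 ?IHM ?polyCM. Qed.

HB.instance Definition _ m := GRing.isZmodMorphism.Build K (mpoly m) (@mconst K m)
  (@mconst_is_zmod_morphism m).
HB.instance Definition _ m := GRing.isMonoidMorphism.Build K (mpoly m) (@mconst K m)
  (@mconst_is_monoid_morphism m).

Lemma msubst_is_ring_morphism m (v : nat -> mpoly m) n :
  zmod_morphism (@msubst K m v n) * monoid_morphism (@msubst K m v n).
Proof.
elim: n => [|n [IHB IHM]].
  by split; [exact: mconst_is_zmod_morphism | exact: mconst_is_monoid_morphism].
split; [exact: horner_map_is_zmod_morphism | exact: horner_map_is_monoid_morphism].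
Qed.

HB.instance Definition _ m v n := GRing.isZmodMorphism.Build (mpoly n) (mpoly m)
  (@msubst K m v n) (msubst_is_ring_morphism v n).1.
HB.instance Definition _ m v n := GRing.isMonoidMorphism.Build (mpoly n) (mpoly m)
  (@msubst K m v n) (msubst_is_ring_morphism v n).2.

Lemma msubstM m (v : nat -> mpoly m) n : {morph @msubst K m v n : p q / p * q}.
Proof. exact: rmorphM. Qed.

Section Valuation.
Variables (m : nat) (v : nat -> mpoly m).

Lemma msubst_mconst n a : msubst v (@mconst K n a) = mconst m a.
Proof. by elim: n => //= n IH; rewrite map_polyC hornerC. Qed.

Lemma msubst_mvar n k : (k < n)%N -> msubst v (mvar K n k) = v k.
Proof.
elim: n => // n IH; rewrite ltnS leq_eqVlt => /predU1P[->|kn] /=.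
  by rewrite eqxx map_polyX hornerX.
by rewrite (ltn_eqF kn) map_polyC hornerC; apply: IH.
Qed.

Lemma eq_msubst n (w : nat -> mpoly m) : (forall k, (k < n)%N -> v k = w k) ->
  @msubst K m v n =1 @msubst K m w n.
Proof.
elim: n => [//|n IH] vw p /=; rewrite vw //.
by congr (_.[_]); apply: eq_map_poly => q; apply: IH => k kn; apply: vw; apply: ltnW.
Qed.

Lemma msubst_vsum N a b : (b <= N)%N ->
  msubst v (vsum K N a b) = \sum_(a <= k < b) v k.
Proof.
move=> bN; rewrite rmorph_sum !big_nat; apply: eq_bigr => k /andP[_ kb].
by apply: msubst_mvar; apply: leq_trans kb bN.
Qed.
End Valuation.

Lemma msubst_vsum_shift N M (w : nat -> mpoly N) o o' a : (o + a <= M)%N ->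
  (forall j, (j < a)%N -> w (o + j)%N = mvar K N (o' + j)) ->
  msubst w (vsum K M o (o + a)) = vsum K N o' (o' + a).
Proof.
have shift (F : nat -> mpoly N) b :
    \sum_(b <= k < b + a) F k = \sum_(0 <= j < a) F (b + j).
  by rewrite -{1}[b]add0n big_addn addKn; apply: eq_bigr => j _; rewrite addnC.
move=> oaM wE; rewrite msubst_vsum // /vsum (shift _ o) (shift _ o') !big_nat.
by apply: eq_bigr => j /andP[_ /wE].
Qed.

Lemma rmorph_msubst m m' (g : {rmorphism mpoly m -> mpoly m'}) (v : nat -> mpoly m) n
  (p : mpoly n) : (forall a, g (mconst m a) = mconst m' a) ->
  g (msubst v p) = msubst (fun k => g (v k)) p.
Proof.
move=> gc; elim: n p => [|n IH] p /=; first exact: gc.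
by rewrite -horner_map -map_poly_comp; congr (_.[_]); apply: eq_map_poly => q /=.
Qed.

Lemma msubst_comp m m' n (v : nat -> mpoly m) (w : nat -> mpoly m') (p : mpoly n) :
  msubst w (msubst v p) = msubst (fun k => msubst w (v k)) p.
Proof. by apply: rmorph_msubst => a; exact: msubst_mconst. Qed.

Lemma msubst_mvar_id n (p : mpoly n) : msubst (mvar K n) p = p.
Proof.
elim: n p => [//|n IH] p /=; rewrite eqxx -[RHS]comp_polyXr; congr (_.[_]).
apply: eq_map_poly => q; rewrite (eq_msubst (w := fun k => (mvar K n k)%:P : mpoly n.+1)).
  by rewrite -(@rmorph_msubst n n.+1 (polyC : {rmorphism mpoly n -> {poly mpoly n}})) ?IH.
by move=> k kn /=; rewrite (ltn_eqF kn).
Qed.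

Lemma msubst_inj m n (v : nat -> mpoly m) (w : nat -> mpoly n) :
  (forall k, (k < n)%N -> msubst w (v k) = mvar K n k) -> injective (@msubst K m v n).
Proof.
move=> wv; apply: (@can_inj _ _ _ (@msubst K n w m)) => p.
by rewrite msubst_comp (eq_msubst wv) msubst_mvar_id.
Qed.

Lemma mvar_neq0 n k : (k < n)%N -> mvar K n k != 0.
Proof.
elim: n => // n IH; rewrite ltnS leq_eqVlt => /predU1P[->|kn] /=.
  by rewrite eqxx polyX_eq0.
by rewrite (ltn_eqF kn) polyC_eq0 IH.
Qed.

Lemma vsum_neq0 N a b : (a < b <= N)%N -> vsum K N a b != 0.
Proof.
case/andP=> ab bN; apply: contraTneq isT => vsum0.
have := msubst_vsum (fun k => (k == a)%:R : mpoly 1) a bN.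
rewrite vsum0 rmorph0 big_ltn // eqxx big_nat big1 ?addr0 => [/esym/eqP|k /andP[ak _]].
  by rewrite oner_eq0.
by rewrite gtn_eqF.
Qed.

Section RationalSubstitution.
Variables (m n : nat) (v : nat -> mpoly m).
Hypothesis v_inj : injective (@msubst K m v n).

Lemma fsubst_div (a b : mpoly n) : b != 0 ->
  fsubst v (a%:F / b%:F) = (msubst v a)%:F / (msubst v b)%:F.
Proof.
move=> b0; apply: (@tofrac_div_map _ _ (@msubst K m v n)).
- by rewrite (raddf_eq0 _ v_inj) denom_ratioP.
- by rewrite (raddf_eq0 _ v_inj).
- by rewrite -tofrac_repr.
Qed.

Lemma fsubst_tofrac (a : mpoly n) : fsubst v a%:F = (msubst v a)%:F.
Proof. by rewrite -[a%:F]divr1 -tofrac1 fsubst_div ?oner_neq0 // rmorph1 tofrac1 divr1. Qed.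

Lemma fsubstM (P Q : RatFct K n) : fsubst v (P * Q) = fsubst v P * fsubst v Q.
Proof.
rewrite [P]tofrac_repr [Q]tofrac_repr mulrACA -invfM -!tofracM.
by rewrite !fsubst_div ?mulf_neq0 ?denom_ratioP // !rmorphM invfM mulrACA.
Qed.

Lemma fsubstV (P : RatFct K n) : fsubst v P^-1 = (fsubst v P)^-1.
Proof.
rewrite [P]tofrac_repr; set a := \n_ _; set b := \d_ _.
have b0 : b != 0 by exact: denom_ratioP.
have [->|a0] := eqVneq a 0.
  by rewrite tofrac0 mul0r invr0 -tofrac0 fsubst_tofrac !rmorph0 invr0.
by rewrite invfM invrK mulrC !fsubst_div // invfM invrK mulrC.
Qed.

Lemma fsubst_mvarV k : (k < n)%N -> fsubst v (mvar K n k)%:F^-1 = (v k)%:F^-1.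
Proof. by move=> kn; rewrite fsubstV fsubst_tofrac msubst_mvar. Qed.
End RationalSubstitution.

Lemma fsubst_comp m m' n (v : nat -> mpoly m) (w : nat -> mpoly m') (P : RatFct K n) :
  injective (@msubst K m v n) -> injective (@msubst K m' w m) ->
  fsubst w (fsubst v P) = fsubst (fun k => msubst w (v k)) P.
Proof.
move=> v_inj w_inj; have vw_inj : injective (@msubst K m' (fun k => msubst w (v k)) n).
  by move=> p q; rewrite -!msubst_comp => /w_inj /v_inj.
have d0 := denom_ratioP (repr P); rewrite [P]tofrac_repr.
rewrite (fsubst_div v_inj) // (fsubst_div w_inj) ?(raddf_eq0 _ v_inj) //.
by rewrite (fsubst_div vw_inj) // !msubst_comp.
Qed.

Lemma eq_fsubst m n (v w : nat -> mpoly m) (P : RatFct K n) :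
  (forall k, (k < n)%N -> v k = w k) -> fsubst v P = fsubst w P.
Proof. by move=> vw; rewrite /fsubst !(eq_msubst vw). Qed.
End Substitution.

Section OperadSubstitutions.
Variable K : fieldType.
Local Notation mpoly := (mpoly K).

Definition pcomp_subst N i m : nat -> mpoly N := fun j =>
  if (j < i)%N then mvar K N j else if j == i then vsum K N i (i + m)
  else mvar K N (j + m - 1).

Definition shift_subst N o : nat -> mpoly N := fun j => mvar K N (o + j).

Lemma pcompNE N n m (P : RatFct K n) i (Q : RatFct K m) :
  pcompN N P i Q = fsubst (pcomp_subst N i m) P * fsubst (shift_subst N i) Q.
Proof. by []. Qed.

Lemma pcomp_subst_lt N i m j : (j < i)%N -> pcomp_subst N i m j = mvar K N j.
Proof. by rewrite /pcomp_subst => ->. Qed.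

Lemma pcomp_subst_eq N i m : pcomp_subst N i m i = vsum K N i (i + m).
Proof. by rewrite /pcomp_subst ltnn eqxx. Qed.

Lemma pcomp_subst_gt N i m j : (i < j)%N -> pcomp_subst N i m j = mvar K N (j + m - 1).
Proof. by move=> ij; rewrite /pcomp_subst ltnNge (ltnW ij) gtn_eqF. Qed.

Lemma shift_subst_inj N o n : (o + n <= N)%N -> injective (@msubst K N (shift_subst N o) n).
Proof.
move=> onN; apply: (msubst_inj (w := fun k => if (o <= k)%N then mvar K n (k - o) else 0)).
move=> k kn; rewrite msubst_mvar ?leq_addr ?addKn //.
by apply: leq_trans onN; rewrite ltn_add2l.
Qed.

Lemma pcomp_subst_inj N i n m : (0 < m)%N -> (i < n)%N -> (n + m - 1 <= N)%N ->
  injective (@msubst K N (pcomp_subst N i m) n).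
Proof.
move=> m0 ilt nmN.
pose w k := if (k <= i)%N then mvar K n k else if (k < i + m)%N then 0
            else mvar K n (k - m + 1).
apply: (msubst_inj (w := w)) => k kn.
have [ki|ik|->] := ltngtP k i.
- rewrite pcomp_subst_lt // msubst_mvar; last by lia.
  by rewrite /w ltnW.
- rewrite pcomp_subst_gt // msubst_mvar; last by lia.
  rewrite /w ifN; last by lia.
  by rewrite ifN; [congr mvar|]; lia.
rewrite pcomp_subst_eq msubst_vsum; last by lia.
rewrite big_ltn; last by lia.
rewrite /w leqnn big_nat big1 ?addr0 // => j /andP[ij jm].
by rewrite ifN ?jm //; lia.
Qed.
End OperadSubstitutions.

(** * The morphism on generators and the recursive formula *)

Lemma dend_identities_inv (F : fieldType) (a b c : F) :
  a != 0 -> b != 0 -> c != 0 -> a + b != 0 -> b + c != 0 ->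
  [/\ c^-1 / b = (b + c)^-1 / c + (b + c)^-1 / b, c^-1 / a = a^-1 / c
    & (a + b)^-1 / b + (a + b)^-1 / a = a^-1 / b].
Proof. by move=> a0 b0 c0 ab0 bc0; split; field; rewrite ?a0 ?b0 ?c0 ?ab0 ?bc0. Qed.

Section PhiOnGenerators.
Variable K : fieldType.

Lemma fsubst_phi_prec N (v : nat -> mpoly K N) : injective (@msubst K N v 2) ->
  fsubst v (phi_prec K) = (v 1%N)%:F^-1.
Proof. by move=> v_inj; rewrite fsubst_mvarV. Qed.

Lemma fsubst_phi_succ N (v : nat -> mpoly K N) : injective (@msubst K N v 2) ->
  fsubst v (phi_succ K) = (v 0%N)%:F^-1.
Proof. by move=> v_inj; rewrite fsubst_mvarV. Qed.

Lemma phi_dend_relations : dend_relations (phi_prec K) (phi_succ K).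
Proof.
rewrite /dend_relations /Defs.pcomp !pcompNE /=.
rewrite !fsubst_phi_prec ?fsubst_phi_succ;
  try by [apply: pcomp_subst_inj | apply: shift_subst_inj].
have vsum2 i : vsum K 3 i (i + 2) = mvar K 3 i + mvar K 3 i.+1.
  by rewrite /vsum addn2 big_nat_recl // big_nat1.
have x_neq0 i : (i < 3)%N -> (mvar K 3 i)%:F != 0 by rewrite tofrac_eq0 => /mvar_neq0.
have xx_neq0 i : (i < 2)%N -> (mvar K 3 i)%:F + (mvar K 3 i.+1)%:F != 0.
  by rewrite -tofracD tofrac_eq0 -vsum2 => i2; rewrite vsum_neq0 //; lia.
have := dend_identities_inv (x_neq0 0 isT) (x_neq0 1 isT) (x_neq0 2 isT)
  (xx_neq0 0 isT) (xx_neq0 1 isT).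
by rewrite -!tofracD -!vsum2.
Qed.
End PhiOnGenerators.

Lemma leaves_gt0 t : (0 < leaves t)%N.
Proof. by elim: t => //= s IH u _; rewrite addn_gt0 IH. Qed.

Lemma leavesE t : leaves t = (arity t).+1.
Proof. by rewrite /arity prednK ?leaves_gt0. Qed.

Lemma arity_node s u : arity (Node s u) = (arity s + arity u).+1.
Proof. by rewrite {1}/arity /= !leavesE addSn addnS. Qed.

Lemma arity_eq0 t : arity t = 0%N -> t = Leaf.
Proof. by case: t => // s u; rewrite arity_node. Qed.

Section PhiRecursion.
Variable K : fieldType.
Local Notation l := (phi_prec K).
Local Notation r := (phi_succ K).

Lemma pcompN_prec_succ : pcompN 3 l 0 r = (mvar K 3 2)%:F^-1 * (mvar K 3 0)%:F^-1.
Proof.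
rewrite pcompNE fsubst_phi_prec ?fsubst_phi_succ ?pcomp_subst_gt //.
- exact: shift_subst_inj.
- exact: pcomp_subst_inj.
Qed.

Lemma pcompN_left_subtree p (P : RatFct K p) : (0 < p)%N ->
  pcompN p.+2 ((mvar K 3 2)%:F^-1 * (mvar K 3 0)%:F^-1) 0 P =
  (mvar K p.+2 p.+1)%:F^-1 * (vsum K p.+2 0 p)%:F^-1 * fsubst (shift_subst K p.+2 0) P.
Proof.
move=> p0; have v_inj : injective (@msubst K _ (pcomp_subst K p.+2 0 p) 3).
  by apply: pcomp_subst_inj => //; lia.
by rewrite pcompNE fsubstM // !fsubst_mvarV // pcomp_subst_gt // pcomp_subst_eq add0n addn2.
Qed.

Lemma pcompN_right_subtree N p q (P : RatFct K p) (Q : RatFct K q) :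
  (0 < p)%N -> (0 < q)%N -> N = (p + q).+1 ->
  pcompN N ((mvar K p.+2 p.+1)%:F^-1 * (vsum K p.+2 0 p)%:F^-1
            * fsubst (shift_subst K p.+2 0) P) p.+1 Q =
  shiftR N 0 P / (vsum K N 0 p)%:F * (shiftR N p.+1 Q / (vsum K N p.+1 N)%:F).
Proof.
move=> p0 q0 EN; rewrite pcompNE.
have v_inj : injective (@msubst K N (pcomp_subst K N p.+1 q) p.+2).
  by apply: pcomp_subst_inj => //; lia.
have s_inj : injective (@msubst K p.+2 (shift_subst K p.+2 0) p).
  by apply: shift_subst_inj; lia.
rewrite 2!(fsubstM v_inj) fsubst_mvarV // fsubstV // fsubst_tofrac // fsubst_comp //.
rewrite pcomp_subst_eq (_ : (p.+1 + q = N)%N); last by lia.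
have -> : msubst (pcomp_subst K N p.+1 q) (vsum K p.+2 0 p) = vsum K N 0 p.
  apply: (msubst_vsum_shift (o := 0%N) (o' := 0%N)); first lia.
  by move=> j jp; rewrite pcomp_subst_lt //; lia.
rewrite (@eq_fsubst K N p _ (shift_subst K N 0) P) => [|k kp]; last first.
  by rewrite msubst_mvar ?pcomp_subst_lt //; lia.
rewrite /shiftR; move: (fsubst _ P) (fsubst _ Q) => A B.
by move: (vsum K N 0 p)%:F^-1 (vsum K N p.+1 N)%:F^-1 => a b; ring.
Qed.

Lemma phiN_leaf_node N c d :
  phiN K N (Node Leaf (Node c d)) = pcompN N l 1 (phi K (Node c d)).
Proof. by []. Qed.

Lemma phiN_node_leaf N a b :
  phiN K N (Node (Node a b) Leaf) = pcompN N r 0 (phi K (Node a b)).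
Proof. by []. Qed.

Lemma phiN_node_node N a b c d : phiN K N (Node (Node a b) (Node c d)) =
  pcompN N (pcompN (arity (Node a b)).+2 (pcompN 3 l 0 r) 0 (phi K (Node a b)))
    (arity (Node a b)).+1 (phi K (Node c d)).
Proof. by []. Qed.

Lemma phi_node s t : phi K (Node s t) =
  (if s is Leaf then 1
   else shiftR (arity (Node s t)) 0 (phi K s)
        / (vsum K (arity (Node s t)) 0 (arity s))%:F)
  * (if t is Leaf then 1
     else shiftR (arity (Node s t)) (arity s).+1 (phi K t)
          / (vsum K (arity (Node s t)) (arity s).+1 (arity (Node s t)))%:F).
Proof.
have ar0 : arity Leaf = 0%N by [].
have := arity_node s t; rewrite {1}/phi.
case: s => [|a b]; case: t => [|c d] ar; rewrite ?mul1r ?mulr1 //.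
- have := arity_node c d => arcd.
  rewrite phiN_leaf_node pcompNE fsubst_phi_prec; last by apply: pcomp_subst_inj; lia.
  by rewrite pcomp_subst_eq mulrC ar ar0.
- have := arity_node a b => arab.
  rewrite phiN_node_leaf pcompNE fsubst_phi_succ; last by apply: pcomp_subst_inj; lia.
  by rewrite pcomp_subst_eq mulrC.
have := arity_node a b; have := arity_node c d => arcd arab.
rewrite phiN_node_node pcompN_prec_succ pcompN_left_subtree ?arab //.
by apply: pcompN_right_subtree; rewrite ?arab ?arcd //; lia.
Qed.
End PhiRecursion.

(** * Denominators and cherries *)

(* [tree_den N o t] is the denominator D(t) of [phi t], with the variables of [t]
   moved to x_o, x_(o+1), ...; [branch_den] also includes the factor of the root. *)
Section TreeDenominator.
Variable K : fieldType.

Fixpoint branch_den (N o : nat) (t : pbt) : mpoly K N :=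
  match t with
  | Leaf => 1
  | Node s u =>
    vsum K N o (o + arity t) * (branch_den N o s * branch_den N (o + arity s).+1 u)
  end.

Lemma branch_den_node N o s u : branch_den N o (Node s u) =
  vsum K N o (o + arity (Node s u)) * (branch_den N o s * branch_den N (o + arity s).+1 u).
Proof. by []. Qed.

Definition tree_den N o t : mpoly K N :=
  if t is Node s u then branch_den N o s * branch_den N (o + arity s).+1 u else 1.

Lemma branch_denE N o t : t != Leaf ->
  branch_den N o t = vsum K N o (o + arity t) * tree_den N o t.
Proof. by case: t. Qed.

Lemma branch_den_neq0 N o t : (o + arity t <= N)%N -> branch_den N o t != 0.
Proof.
elim: t o => [|s IHs u IHu] o /=; first by rewrite oner_neq0.
rewrite arity_node => tN; rewrite !mulf_neq0 ?vsum_neq0 ?IHs ?IHu //; lia.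
Qed.

Lemma msubst_branch_den N M (w : nat -> mpoly K N) o o' t : (o + arity t <= M)%N ->
  (forall j, (j < arity t)%N -> w (o + j)%N = mvar K N (o' + j)) ->
  msubst w (branch_den M o t) = branch_den N o' t.
Proof.
elim: t o o' => [|s IHs u IHu] o o' /=; first by rewrite rmorph1.
rewrite arity_node => tM wE; rewrite !msubstM (msubst_vsum_shift (o' := o')) ?arity_node //.
congr (_ * (_ * _)); first by apply: IHs => [|j js]; [lia | apply: wE; lia].
apply: IHu => [|j ju]; first lia.
by rewrite !addSn -!addnA -!addnS; apply: wE; lia.
Qed.

Lemma msubst_tree_den N M (w : nat -> mpoly K N) o o' t : (o + arity t <= M)%N ->
  (forall j, (j < arity t)%N -> w (o + j)%N = mvar K N (o' + j)) ->
  msubst w (tree_den M o t) = tree_den N o' t.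
Proof.
case: t => [|s u] /=; first by rewrite rmorph1.
rewrite arity_node => tM wE; rewrite msubstM.
congr (_ * _); first by apply: msubst_branch_den => [|j js]; [lia | apply: wE; lia].
apply: msubst_branch_den => [|j ju]; first lia.
by rewrite !addSn -!addnA -!addnS; apply: wE; lia.
Qed.

Lemma shiftR_tree_denV N o t : (o + arity t <= N)%N ->
  shiftR N o (tree_den (arity t) 0 t)%:F^-1 = (tree_den N o t)%:F^-1.
Proof.
move=> tN; rewrite /shiftR fsubstV ?fsubst_tofrac; try exact: shift_subst_inj.
by rewrite (msubst_tree_den (o' := o)).
Qed.

Lemma phi_tree_den t : phi K t = (tree_den (arity t) 0 t)%:F^-1.
Proof.
elim: t => [|s IHs u IHu]; first by rewrite /= invr1.
rewrite phi_node /= tofracM invfM; have := arity_node s u => ar.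
congr (_ * _).
  case: s IHs ar => [|a b] IHs ar; first by rewrite invr1.
  rewrite IHs shiftR_tree_denV; last lia.
  by rewrite (branch_denE _ _ (isT : Node a b != Leaf)) add0n tofracM invfM mulrC.
case: u IHu ar => [|c d] IHu ar; first by rewrite invr1.
rewrite IHu shiftR_tree_denV; last lia.
rewrite (branch_denE _ _ (isT : Node c d != Leaf)) tofracM invfM mulrC.
by rewrite addSn -ar.
Qed.
End TreeDenominator.

(* The internal vertices of a tree are numbered in order, the root of [Node s u]
   getting number [arity s]; [cherry k t] says that vertex [k] has two leaves as
   children, [prune k t] replaces it by a leaf and [graft k t] replaces leaf [k]
   by [Ytree]. *)
Fixpoint cherry (k : nat) (t : pbt) : bool :=
  match t with
  | Leaf => false
  | Node s u => if (k < arity s)%N then cherry k s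
                else if k == arity s then (s == Leaf) && (u == Leaf)
                else cherry (k - (arity s).+1) u
  end.

Fixpoint prune (k : nat) (t : pbt) : pbt :=
  match t with
  | Leaf => Leaf
  | Node s u => if (k < arity s)%N then Node (prune k s) u
                else if k == arity s then Leaf
                else Node s (prune (k - (arity s).+1) u)
  end.

Fixpoint graft (k : nat) (t : pbt) : pbt :=
  match t with
  | Leaf => Ytree
  | Node s u => if (k <= arity s)%N then Node (graft k s) u
                else Node s (graft (k - (arity s).+1) u)
  end.

Lemma cherry_lt k t : cherry k t -> (k < arity t)%N.
Proof.
elim: t k => //= s IHs u IHu k; rewrite arity_node.
case: ltnP => [ks _|sk]; first lia.
by case: eqVneq => [->|ks /IHu]; lia.
Qed.

Lemma arity_prune k t : cherry k t -> arity (prune k t) = (arity t).-1.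
Proof.
elim: t k => //= s IHs u IHu k; rewrite arity_node.
case: ltnP => [ks cs|sk] /=; first by rewrite arity_node IHs //; have := cherry_lt cs; lia.
case: eqVneq => [_ /andP[/eqP-> /eqP->]|ks cu] //=.
by rewrite arity_node IHu //; have := cherry_lt cu; lia.
Qed.

Lemma pruneK k t : cherry k t -> graft k (prune k t) = t.
Proof.
elim: t k => //= s IHs u IHu k.
case: ltnP => [ks cs|sk] /=; first by rewrite arity_prune // IHs // (_ : k <= _)%N //; lia.
case: eqVneq => [_ /andP[/eqP-> /eqP->]|ks cu] //=.
by rewrite ifN ?IHu //; lia.
Qed.

Lemma exists_cherry t : (0 < arity t)%N -> exists k, cherry k t.
Proof.
elim: t => // s IHs u IHu _.
have [s0|sp] := posnP (arity s).
  have [u0|up] := posnP (arity u).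
    by exists 0%N; rewrite /= s0 (arity_eq0 s0) (arity_eq0 u0).
  have [k ck] := IHu up; exists (k + (arity s).+1)%N.
  by rewrite /= ifN ?ifN ?addnK //; lia.
by have [k ck] := IHs sp; exists k; rewrite /= (cherry_lt ck).
Qed.

Section ZeroSubstitution.
Variables (K : fieldType) (n k : nat).
Hypothesis kn : (k <= n)%N.

Definition zero_subst : nat -> mpoly K n := fun j =>
  if (j < k)%N then mvar K n j else if j == k then 0 else mvar K n j.-1.

Lemma zero_subst_lt j : (j < k)%N -> zero_subst j = mvar K n j.
Proof. by rewrite /zero_subst => ->. Qed.

Lemma zero_subst_gt j : (k < j)%N -> zero_subst j = mvar K n j.-1.
Proof. by move=> kj; rewrite /zero_subst ltnNge (ltnW kj) gtn_eqF. Qed.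

Lemma msubst_zero_vsum a b : (a <= b <= n.+1)%N ->
  msubst zero_subst (vsum K n.+1 a b) = vsum K n (a - (k < a)) (b - (k < b)).
Proof.
case/andP=> ab bn; rewrite msubst_vsum //.
have low c d : (d <= k)%N -> \sum_(c <= j < d) zero_subst j = vsum K n c d.
  by move=> dk; apply: eq_big_nat => j /andP[_ jd]; rewrite zero_subst_lt //; lia.
have high c d : (k < c)%N -> \sum_(c <= j < d) zero_subst j = vsum K n c.-1 d.-1.
  move=> kc; rewrite -(prednK (leq_ltn_trans (leq0n k) kc)) big_add1 /vsum.
  by apply: eq_big_nat => j /andP[cj _]; rewrite zero_subst_gt //; lia.
have [bk|kb] := leqP b k; first by rewrite low // (leq_gtF (leq_trans ab bk)) !subn0.
have [ka|ak] := ltnP k a; first by rewrite high // !subn1.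
rewrite (@big_cat_nat _ _ _ k) ?(ltnW kb) // [\sum_(k <= j < b) _]big_ltn //.
rewrite low // high // subn0 subn1 /=.
rewrite /zero_subst ltnn eqxx add0r /vsum -big_cat_nat //; lia.
Qed.

Lemma msubst_zero_vsum_neq0 a b : (a < b <= n.+1)%N -> ~~ ((a == k) && (b == k.+1)) ->
  msubst zero_subst (vsum K n.+1 a b) != 0.
Proof.
case/andP=> ab bn abk; rewrite msubst_zero_vsum ?(ltnW ab) // vsum_neq0 //.
by move: abk; case: ltnP; case: ltnP => /=; lia.
Qed.

Lemma msubst_zero_branch_den_lt o t : (o + arity t <= k)%N ->
  msubst zero_subst (branch_den K n.+1 o t) = branch_den K n o t.
Proof.
by move=> tk; apply: msubst_branch_den => [|j jt]; [lia | rewrite zero_subst_lt //; lia].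
Qed.

Lemma msubst_zero_branch_den_gt o t : (k < o)%N -> (o + arity t <= n.+1)%N ->
  msubst zero_subst (branch_den K n.+1 o t) = branch_den K n o.-1 t.
Proof.
move=> ko tn; apply: msubst_branch_den => // j jt.
by rewrite zero_subst_gt; [congr mvar|]; lia.
Qed.

Definition cherry_at o t := (o <= k)%N && cherry (k - o) t.

Lemma msubst_zero_branch_den_neq0 o t : ~~ cherry_at o t -> (o + arity t <= n.+1)%N ->
  msubst zero_subst (branch_den K n.+1 o t) != 0.
Proof.
elim: t o => [|s IHs u IHu] o ct tn; rewrite [branch_den _ _ _]/=.
  by rewrite rmorph1 oner_neq0.
have ar := arity_node s u; rewrite !msubstM !mulf_neq0 //.
- apply: msubst_zero_vsum_neq0; first by apply/andP; split; lia.
  apply: contra ct => /andP[/eqP ok /eqP ak]; rewrite /cherry_at ok leqnn subnn /=.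
  have s0 : arity s = 0%N by lia.
  have u0 : arity u = 0%N by lia.
  by rewrite (arity_eq0 s0) (arity_eq0 u0).
- apply: IHs; last lia.
  by apply: contra ct => /andP[ok cs]; rewrite /cherry_at ok /= (cherry_lt cs).
apply: IHu; last lia.
apply: contra ct => /andP[ok cu]; rewrite /cherry_at /= ifN ?ifN; try lia.
by rewrite (_ : k - o - (arity s).+1 = k - (o + arity s).+1)%N //; lia.
Qed.

Lemma branch_den_cherry o t : cherry_at o t -> (o + arity t <= n.+1)%N ->
  exists2 E, branch_den K n.+1 o t = mvar K n.+1 k * E
           & msubst zero_subst E = branch_den K n o (prune (k - o) t).
Proof.
elim: t o => [|s IHs u IHu] o; first by rewrite /cherry_at andbF.
case/andP=> ok ct tn; have ar := arity_node s u.
have kt : (k < o + arity (Node s u))%N by have := cherry_lt ct; lia.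
have ev_vsum : msubst zero_subst (vsum K n.+1 o (o + arity (Node s u))) =
               vsum K n o (o + arity (Node s u)).-1.
  rewrite msubst_zero_vsum ?(leq_gtF ok) ?kt ?subn0 ?subn1 //.
  by apply/andP; split; lia.
move: ct; rewrite branch_den_node [prune _ _]/= [cherry _ _]/=.
case: ltngtP => [hs cs|sh cu|hs /andP[/eqP s0 /eqP u0]].
- have cs' : cherry_at o s by rewrite /cherry_at ok.
  have [|Es HEs evEs] := IHs o cs'; first lia.
  exists (vsum K n.+1 o (o + arity (Node s u)) * (Es * branch_den K n.+1 (o + arity s).+1 u)).
    by rewrite HEs -mulrA mulrCA.
  rewrite !msubstM ev_vsum evEs msubst_zero_branch_den_gt; try lia.
  have sp := cherry_lt cs.
  rewrite branch_den_node !arity_node (arity_prune cs).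
  by congr (vsum _ _ _ _ * (_ * branch_den _ _ _ _)); lia.
- have cu' : cherry_at (o + arity s).+1 u.
    by rewrite /cherry_at (_ : k - (o + arity s).+1 = k - o - (arity s).+1)%N ?cu ?andbT; lia.
  have [|Eu HEu evEu] := IHu _ cu'; first lia.
  exists (vsum K n.+1 o (o + arity (Node s u)) * (branch_den K n.+1 o s * Eu)).
    by rewrite HEu [RHS]mulrCA; congr (_ * _); rewrite mulrCA.
  rewrite !msubstM ev_vsum evEu msubst_zero_branch_den_lt; last lia.
  have up := cherry_lt cu.
  rewrite branch_den_node !arity_node (arity_prune cu).
  rewrite (_ : k - (o + arity s).+1 = k - o - (arity s).+1)%N; last lia.
  by congr (vsum _ _ _ _ * _); lia.
have ko : k = o by move: hs; rewrite s0 (_ : arity Leaf = 0%N) //; lia.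
exists 1; last by rewrite rmorph1.
by rewrite s0 u0 ko !mulr1 addn1 /vsum big_nat1.
Qed.
End ZeroSubstitution.

(** * Linear independence *)

Section Independence.
Variable K : fieldType.

Lemma phiN_branch_den n t : arity t = n -> (0 < n)%N ->
  phiN K n t = (vsum K n 0 n)%:F / (branch_den K n 0 t)%:F.
Proof.
move=> <- t0; have tL : t != Leaf by apply: contraTneq t0 => ->.
rewrite -[phiN _ _ t]/(phi K t) phi_tree_den branch_denE // add0n tofracM invfM.
rewrite mulrA divff ?mul1r //.
by rewrite tofrac_eq0 vsum_neq0 // t0 leqnn.
Qed.

Section CherrySpecialization.
Variables (n k : nat) (t : pbt) (a : K).
Hypotheses (kn : (k <= n.+1)%N) (tn : arity t = n.+2).
Local Notation g := (@msubst K n.+1 (zero_subst K n.+1 k) n.+2).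
Local Notation x := (mvar K n.+2 k)%:F.

Lemma specializes_cherry_term : cherry k t ->
  specializes g (x * (rconst n.+2 a * phiN K n.+2 t))
                (rconst n.+1 a * phiN K n.+1 (prune k t)).
Proof.
move=> ck; have ck0 : cherry_at k 0 t by rewrite /cherry_at subn0.
have [|E bdE gE] := @branch_den_cherry K n.+1 k kn 0 t ck0; first by rewrite tn.
rewrite subn0 in gE; have pn : arity (prune k t) = n.+1 by rewrite arity_prune ?tn.
have gE0 : g E != 0 by rewrite gE branch_den_neq0 ?pn.
have E0 : E%:F != 0 by rewrite tofrac_eq0; apply: contra gE0 => /eqP ->; rewrite rmorph0.
have x0 : x != 0 by rewrite tofrac_eq0 mvar_neq0 //; lia.
exists (mconst n.+2 a * vsum K n.+2 0 n.+2), E; split => //.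
  rewrite phiN_branch_den // bdE /rconst !tofracM invfM.
  by rewrite mulrCA (mulrCA x) mulVKf // mulrA.
rewrite phiN_branch_den // msubstM msubst_mconst gE msubst_zero_vsum //; last by rewrite leqnn.
by rewrite ltn0 ltnS kn subn0 subn1 /rconst tofracM mulrA.
Qed.

Lemma specializes_noncherry_term : ~~ cherry k t ->
  specializes g (x * (rconst n.+2 a * phiN K n.+2 t)) 0.
Proof.
move=> nck; exists (mvar K n.+2 k * mconst n.+2 a * vsum K n.+2 0 n.+2).
exists (branch_den K n.+2 0 t); split.
- by apply: msubst_zero_branch_den_neq0; rewrite ?tn // /cherry_at subn0 leq0n.
- by rewrite phiN_branch_den // !tofracM !mulrA.
rewrite !msubstM msubst_mvar; last lia.
by rewrite /zero_subst ltnn eqxx !(mul0r, rmorph0).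
Qed.
End CherrySpecialization.

Definition phi_free n := forall (ts : seq pbt) (c : pbt -> K),
  uniq ts -> all (fun t => leaves t == n.+1)%N ts ->
  \sum_(t <- ts) rconst n (c t) * phiN K n t = 0 -> forall t, t \in ts -> c t = 0.

Lemma phi_free_unique_tree n T : phiN K n T = 1 ->
  (forall t, leaves t = n.+1 -> t = T) -> phi_free n.
Proof.
move=> phiT onlyT ts c U A S t tts.
have allT s : s \in ts -> s = T by move=> /(allP A) /eqP /onlyT.
have tT := allT t tts; subst t.
have ts1 : ts = [:: T].
  rewrite -(filter_pred1_uniq U tts); apply/esym/all_filterP/allP => s /allT ->.
  exact: eqxx.
move: S; rewrite ts1 big_seq1 phiT mulr1 /rconst => /eqP.
by rewrite tofrac_eq0 fmorph_eq0 => /eqP.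
Qed.

Lemma phi_free_step n : phi_free n.+1 -> phi_free n.+2.
Proof.
move=> IH ts c U A S t0 t0ts.
have ar t : t \in ts -> arity t = n.+2 by move=> /(allP A) /eqP; rewrite leavesE => -[].
have [k ck0] : exists k, cherry k t0 by apply: exists_cherry; rewrite ar.
have kn : (k <= n.+1)%N by have := cherry_lt ck0; rewrite ar.
have spec : specializes (@msubst K n.+1 (zero_subst K n.+1 k) n.+2)
    (\sum_(t <- ts) (mvar K n.+2 k)%:F * (rconst n.+2 (c t) * phiN K n.+2 t))
    (\sum_(t <- ts) if cherry k t then rconst n.+1 (c t) * phiN K n.+1 (prune k t) else 0).
  apply: specializes_sum => t tts; case: ifPn => ckt.
    exact: (specializes_cherry_term (c t) kn (ar t tts) ckt).
  exact: (specializes_noncherry_term (c t) kn (ar t tts) ckt).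
have S' : \sum_(t <- ts | cherry k t) rconst n.+1 (c t) * phiN K n.+1 (prune k t) = 0.
  rewrite big_mkcond; apply: (specializes_unique spec).
  suff -> : \sum_(t <- ts) (mvar K n.+2 k)%:F * (rconst n.+2 (c t) * phiN K n.+2 t) = 0.
    exact: specializes0.
  by rewrite -big_distrr /= S mulr0.
rewrite -(pruneK ck0); apply: (IH [seq prune k t | t <- ts & cherry k t] (c \o graft k)).
- rewrite map_inj_in_uniq ?filter_uniq // => t1 t2.
  by rewrite !mem_filter => /andP[c1 _] /andP[c2 _] E; rewrite -(pruneK c1) E pruneK.
- apply/allP => t' /mapP[t]; rewrite mem_filter => /andP[ckt tts] ->.
  by rewrite leavesE arity_prune // ar.
- rewrite big_map big_filter -[RHS]S'.
  by apply: eq_bigr => t ckt /=; rewrite pruneK.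
by rewrite map_f // mem_filter ck0.
Qed.

Lemma phi_free_all n : phi_free n.
Proof.
elim: n => [|[|n] IH]; last exact: phi_free_step.
  apply: (@phi_free_unique_tree 0 Leaf) => // t; rewrite leavesE => -[]; exact: arity_eq0.
apply: (@phi_free_unique_tree 1 Ytree) => // t; rewrite leavesE => -[].
case: t => // s u; rewrite arity_node => -[] /eqP; rewrite addn_eq0 => /andP[/eqP s0 /eqP u0].
by rewrite (arity_eq0 s0) (arity_eq0 u0).
Qed.
End Independence.

Theorem proposition3p3 (K : fieldType) :
  dend_relations (phi_prec K) (phi_succ K)
  /\ phi K Ytree = 1
  /\ (forall s t : pbt,
        phi K (Node s t) =
          (if s is Leaf then 1
           else shiftR (arity (Node s t)) 0 (phi K s)
                / (vsum K (arity (Node s t)) 0 (arity s))%:F)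
        * (if t is Leaf then 1
           else shiftR (arity (Node s t)) (arity s).+1 (phi K t)
                / (vsum K (arity (Node s t)) (arity s).+1 (arity (Node s t)))%:F))
  /\ (forall (n : nat) (ts : seq pbt) (c : pbt -> K),
        uniq ts -> all (fun t => leaves t == n.+1)%N ts ->
        \sum_(t <- ts) rconst n (c t) * phiN K n t = 0 ->
        forall t, t \in ts -> c t = 0).
Proof.
split; first exact: phi_dend_relations.
split; first by [].
split; first exact: phi_node.
exact: phi_free_all.
Qed.
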